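(* Let $u_1,\dots,u_n\in\mathbb{R}^d$, $c_1,\dots,c_m\in\mathbb{R}^n_{\ge0}$, budgets $b_1,\dots,b_m$, and $\varepsilon>0$ with $b_j\ge\frac{d\|c_j\|_\infty}{\varepsilon}$ for all $1\le j\le m$. Let $x\in[0,1]^n$ be an optimal solution of the convex program: minimize $\operatorname{tr}((\sum_{i=1}^n x(i)u_iu_i^\top)^{-1})$ subject to $\langle c_j,x\rangle\le b_j$ ($1\le j\le m$), $0\le x(i)\le1$ ($1\le i\le n$). Let $X=\sum_i x(i)u_iu_i^\top$ (nonsingular) and $v_i=X^{-1/2}u_i$. Then for each $1\le i\le n$ with $0<x(i)<1$, \[ \langle X^{-1},v_iv_i^\top\rangle\le\frac{\varepsilon}{d}\operatorname{tr}(X^{-1}). \]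
   Context: $\langle M,N\rangle=\operatorname{tr}(MN)$ for symmetric matrices. *)

From HB Require Import structures.
From mathcomp Require Import all_boot all_order all_algebra.
From mathcomp Require Import reals.
Set Implicit Arguments. Unset Strict Implicit. Unset Printing Implicit Defensive.
Import Order.TTheory GRing.Theory Num.Theory.
Local Open Scope ring_scope.

Definition mx_inner (R : realType) (d : nat) (M N : 'M[R]_d) : R := \tr (M *m N).

Definition design_mx (R : realType) (d n : nat) (u : 'I_n -> 'cV[R]_d)
  (x : 'I_n -> R) : 'M[R]_d :=
  \sum_(i < n) x i *: (u i *m (u i)^T).

Definition vdot (R : realType) (n : nat) (c x : 'I_n -> R) : R :=
  \sum_(i < n) c i * x i.

Definition supnorm (R : realType) (n : nat) (c : 'I_n -> R) : R :=
  \big[Num.max/0]_(i < n) `|c i|.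

Definition feasible (R : realType) (n m : nat) (c : 'I_m -> 'I_n -> R)
  (b : 'I_m -> R) (x : 'I_n -> R) : Prop :=
  (forall j, vdot (c j) x <= b j) /\ (forall i, 0 <= x i <= 1).

(* x is an optimal solution of  min tr((sum_i x(i) u_i u_i^T)^{-1})
   subject to feasibility; the objective is +oo at singular designs. *)
Definition optimal (R : realType) (d n m : nat) (u : 'I_n -> 'cV[R]_d)
  (c : 'I_m -> 'I_n -> R) (b : 'I_m -> R) (x : 'I_n -> R) : Prop :=
  feasible c b x /\ design_mx u x \in unitmx /\
  forall y, feasible c b y -> design_mx u y \in unitmx ->
    \tr (invmx (design_mx u x)) <= \tr (invmx (design_mx u y)).

Definition psd (R : realType) (d : nat) (S : 'M[R]_d) : Prop :=
  S^T = S /\ forall z : 'cV[R]_d, 0 <= ((z^T *m S *m z) 0 0).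

Definition is_psd_sqrt (R : realType) (d : nat) (A S : 'M[R]_d) : Prop :=
  psd S /\ S *m S = A.

From HB Require Import structures.
From mathcomp Require Import all_boot all_order all_algebra.
From mathcomp Require Import reals ring lra.
Import Order.TTheory GRing.Theory Num.Theory.
Local Open Scope ring_scope.

(* If the bound failed at some i with x i < 1, put k := d / eps and move a small
   fraction s of the design toward coordinate i: x' := (1 - s) x + s k e_i.  It stays
   feasible because b_j >= k ||c_j||_oo >= k c_j(i), and its design matrix is the
   rank-one update (1 - s) X + s k u_i u_i^T.  By Sherman-Morrison,
     tr X'^-1 = T / (1 - s) - s k g / ((1 - s) (1 - s + s k h))
   with T = tr X^-1, h = u_i^T X^-1 u_i >= 0 and g = tr (X^-2 u_i u_i^T), which equals
   <X^-1, v_i v_i^T> because v_i = X^-1/2 u_i.  This is below T for small s as soon as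
   T < k g, contradicting optimality. *)

Lemma rank1_mulmx_rank1 {F : comRingType} {d : nat} (w : 'cV[F]_d) (M : 'M[F]_d) :
  w *m w^T *m M *m (w *m w^T) = (w^T *m M *m w) 0 0 *: (w *m w^T).
Proof.
have -> : w *m w^T *m M *m (w *m w^T) = w *m (w^T *m M *m w) *m w^T.
  by rewrite !mulmxA.
by rewrite {1}[w^T *m _ *m w]mx11_scalar mul_mx_scalar -scalemxAl.
Qed.

Section ShermanMorrison.
Context {F : fieldType} {d : nat} {X P : 'M[F]_d} {a t h : F}.
Hypotheses (X_unit : X \in unitmx) (PXP : P *m invmx X *m P = h *: P).
Hypotheses (a_neq0 : a != 0) (ath_neq0 : a + t * h != 0).

Let Z := a^-1 *: invmx X - (t / (a * (a + t * h))) *: (invmx X *m P *m invmx X).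

Lemma update_mulmx_inv : (a *: X + t *: P) *m Z = 1%:M.
Proof.
rewrite /Z mulmxDl !mulmxBr -!scalemxAl -!scalemxAr !scalerA !mulmxA.
rewrite mulmxV // mul1mx PXP -!scalemxAl !scalerA mulfV // scale1r.
rewrite -addrA -scaleNr -scalerBl -scalerDl.
suff -> : - (a * (t / (a * (a + t * h))))
          + (t * a^-1 - t * (t / (a * (a + t * h))) * h) = 0
  by rewrite scale0r addr0.
by field; rewrite a_neq0 ath_neq0.
Qed.

Lemma unitmx_update : a *: X + t *: P \in unitmx.
Proof. by case: (mulmx1_unit update_mulmx_inv). Qed.

Lemma mxtrace_invmx_update :
  \tr (invmx (a *: X + t *: P)) =
    a^-1 * \tr (invmx X) - t / (a * (a + t * h)) * \tr (invmx X *m invmx X *m P).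
Proof.
rewrite -[invmx _]mulmx1 -update_mulmx_inv mulmxA mulVmx ?unitmx_update // mul1mx.
by rewrite /Z raddfB /= !mxtraceZ mxtrace_mulC !mulmxA.
Qed.

End ShermanMorrison.

Definition perturb {R : ringType} {n : nat} (x : 'I_n -> R) (a : R) (i : 'I_n) (t : R)
    : 'I_n -> R :=
  fun l => a * x l + (if l == i then t else 0).

Section Perturb.
Variables (R : realType) (n : nat) (x : 'I_n -> R) (a : R) (i : 'I_n) (t : R).

Lemma vdot_perturb (c : 'I_n -> R) : vdot c (perturb x a i t) = a * vdot c x + c i * t.
Proof.
rewrite /vdot /perturb mulr_sumr.
under eq_bigr => l _ do rewrite mulrDr mulrCA (fun_if (fun r => c l * r)) mulr0.
by rewrite big_split -big_mkcond /= big_pred1_eq.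
Qed.

Lemma design_mx_perturb (d : nat) (u : 'I_n -> 'cV[R]_d) :
  design_mx u (perturb x a i t) = a *: design_mx u x + t *: (u i *m (u i)^T).
Proof.
rewrite /design_mx /perturb.
under eq_bigr => l _ do rewrite scalerDl -scalerA (fun_if (fun r => r *: _)) scale0r.
by rewrite big_split -scaler_sumr -big_mkcond /= big_pred1_eq.
Qed.

End Perturb.

Lemma normr_le_supnorm (R : realType) (n : nat) (c : 'I_n -> R) (i : 'I_n) :
  `|c i| <= supnorm c.
Proof. exact: (le_bigmax 0 (fun l => `|c l|) i). Qed.

Lemma feasible_perturb (R : realType) (n m : nat) (c : 'I_m -> 'I_n -> R)
    (b : 'I_m -> R) (x : 'I_n -> R) (i : 'I_n) (k s : R) :
  feasible c b x -> (forall j, k * supnorm (c j) <= b j) ->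
  0 <= k -> 0 <= s <= 1 -> s * k <= 1 - x i ->
  feasible c b (perturb x (1 - s) i (s * k)).
Proof.
move=> [x_budget x_box] k_budget k_ge0 /andP[s_ge0 s_le1] sk_le; split=> [j | l].
  have s_compl_ge0 : 0 <= 1 - s by rewrite subr_ge0.
  have := ler_wpM2l s_compl_ge0 (x_budget j); have := ler_wpM2l s_ge0 (k_budget j).
  have : c j i * (s * k) <= supnorm (c j) * (s * k).
    by rewrite ler_wpM2r ?mulr_ge0 // (le_trans (ler_norm _)) ?normr_le_supnorm.
  rewrite vdot_perturb; lra.
have sk_ge0 := mulr_ge0 s_ge0 k_ge0.
move: (x_box l); rewrite /perturb; case: eqP => [-> | _] /andP[xl0 xl1];
  apply/andP; split; nra.
Qed.

Lemma update_objective_lt (R : realFieldType) (T g h k s : R) :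
  0 < s < 1 -> 0 <= h -> 0 <= k -> T * (1 - s) + s * (T * k * h) < k * g ->
  (1 - s)^-1 * T - s * k / ((1 - s) * (1 - s + s * k * h)) * g < T.
Proof.
move=> /andP[s_gt0 s_lt1] h_ge0 k_ge0 decrease.
have a_gt0 : 0 < 1 - s by rewrite subr_gt0.
have ath_gt0 : 0 < 1 - s + s * k * h.
  by have := mulr_ge0 (mulr_ge0 (ltW s_gt0) k_ge0) h_ge0; lra.
rewrite -subr_lt0.
have -> : (1 - s)^-1 * T - s * k / ((1 - s) * (1 - s + s * k * h)) * g - T =
    s * (T * (1 - s) + s * (T * k * h) - k * g) / ((1 - s) * (1 - s + s * k * h)).
  by field; rewrite !lt0r_neq0.
by rewrite pmulr_llt0 ?invr_gt0 ?mulr_gt0 // pmulr_rlt0 // subr_lt0.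
Qed.

Lemma exists_small_step {R : realFieldType} {T g k s0 : R} (h : R) :
  T < k * g -> 0 < s0 ->
  exists2 s, 0 < s <= s0 & T * (1 - s) + s * (T * k * h) < k * g.
Proof.
move=> Tkg s0_gt0; set A := T * k * h - T.
have C_gt0 : 0 < `|A| + 1 by rewrite ltr_pwDr.
have del_gt0 : 0 < k * g - T by rewrite subr_gt0.
pose s := Num.min s0 ((k * g - T) / (`|A| + 1)).
have s_gt0 : 0 < s by rewrite lt_min s0_gt0 divr_gt0.
exists s; first by rewrite s_gt0 ge_min lexx.
have : s * (`|A| + 1) <= k * g - T by rewrite -ler_pdivlMr // ge_min lexx orbT.
have : s * A < s * (`|A| + 1) by rewrite ltr_pM2l // (le_lt_trans (ler_norm _)) ?ltrDl.
rewrite /A; nra.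
Qed.

Lemma rank1_step_mxtrace_invmx_lt {R : realFieldType} {d : nat} {X : 'M[R]_d}
    {w : 'cV[R]_d} {k s : R} :
  X \in unitmx -> 0 <= (w^T *m invmx X *m w) 0 0 -> 0 <= k -> 0 < s < 1 ->
  \tr (invmx X) * (1 - s) + s * (\tr (invmx X) * k * (w^T *m invmx X *m w) 0 0)
    < k * \tr (invmx X *m invmx X *m (w *m w^T)) ->
  (1 - s) *: X + (s * k) *: (w *m w^T) \in unitmx /\
  \tr (invmx ((1 - s) *: X + (s * k) *: (w *m w^T))) < \tr (invmx X).
Proof.
set h := (w^T *m invmx X *m w) 0 0 => X_unit h_ge0 k_ge0 s01 decrease.
have /andP[s_gt0 s_lt1] := s01.
have a_neq0 : 1 - s != 0 by rewrite subr_eq0 eq_sym lt_eqF.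
have ath_neq0 : 1 - s + s * k * h != 0.
  by apply: lt0r_neq0; have := mulr_ge0 (mulr_ge0 (ltW s_gt0) k_ge0) h_ge0; lra.
have PXP := rank1_mulmx_rank1 w (invmx X).
split; first exact: unitmx_update X_unit PXP a_neq0 ath_neq0.
by rewrite (mxtrace_invmx_update X_unit PXP a_neq0 ath_neq0) update_objective_lt.
Qed.

Lemma quad_form_sqr_ge0 (R : realDomainType) (d : nat) (S : 'M[R]_d) (w : 'cV[R]_d) :
  S^T = S -> 0 <= (w^T *m (S *m S) *m w) 0 0.
Proof.
move=> S_sym; have -> : w^T *m (S *m S) *m w = (S *m w)^T *m (S *m w).
  by rewrite trmx_mul S_sym !mulmxA.
by rewrite mxE sumr_ge0 // => j _; rewrite mxE -expr2 sqr_ge0.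
Qed.

Lemma mx_inner_sqr_rank1 (R : realType) (d : nat) (S : 'M[R]_d) (w : 'cV[R]_d) :
  S^T = S ->
  mx_inner (S *m S) ((S *m w) *m (S *m w)^T) = \tr (S *m S *m (S *m S) *m (w *m w^T)).
Proof.
by move=> S_sym; rewrite /mx_inner trmx_mul S_sym !mulmxA mxtrace_mulC !mulmxA.
Qed.

Theorem lemma4p16 (R : realType) (d n m : nat) (u : 'I_n -> 'cV[R]_d)
  (c : 'I_m -> 'I_n -> R) (b : 'I_m -> R) (eps : R) (x : 'I_n -> R)
  (Xhalfinv : 'M[R]_d) :
  0 < eps ->
  (forall j i, 0 <= c j i) ->
  (forall j, d%:R * supnorm (c j) / eps <= b j) ->
  optimal u c b x ->
  is_psd_sqrt (invmx (design_mx u x)) Xhalfinv ->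
  forall i : 'I_n, 0 < x i < 1 ->
    let v := Xhalfinv *m u i in
    mx_inner (invmx (design_mx u x)) (v *m v^T)
      <= eps / d%:R * \tr (invmx (design_mx u x)).
Proof.
move=> eps_gt0 _ budget [x_feas [X_unit x_opt]] [[S_sym _] SS] i /andP[_ xi_lt1] /=.
have [d0 | d_gt0] := posnP d.
  by subst d; rewrite /mx_inner /mxtrace !big_ord0 mulr0.
set X := design_mx u x in X_unit x_opt SS *; set k := d%:R / eps.
have k_gt0 : 0 < k by rewrite divr_gt0 ?ltr0n.
rewrite -SS mx_inner_sqr_rank1 // SS -invf_div -/k ler_pdivlMl // leNgt.
apply/negP => Tkg; set h := ((u i)^T *m invmx X *m u i) 0 0.
have h_ge0 : 0 <= h by rewrite /h -SS quad_form_sqr_ge0.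
have s0_gt0 : 0 < Num.min (1 / 2) ((1 - x i) / k).
  by rewrite lt_min !divr_gt0 ?subr_gt0 ?ltr0n.
have [s /andP[s_gt0]] := exists_small_step h Tkg s0_gt0.
rewrite le_min (ler_pdivlMr _ _ k_gt0) => /andP[s_half sk_le] decrease.
have s01 : 0 < s < 1 by apply/andP; split; lra.
have y_feas : feasible c b (perturb x (1 - s) i (s * k)).
  apply: feasible_perturb (ltW k_gt0) _ sk_le => //.
    by move=> j; rewrite /k mulrAC.
  by apply/andP; split; lra.
have [Y_unit Y_lt] := rank1_step_mxtrace_invmx_lt X_unit h_ge0 (ltW k_gt0) s01 decrease.
have := x_opt _ y_feas; rewrite design_mx_perturb => /(_ Y_unit).
by rewrite leNgt Y_lt.
Qed.
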